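(* Let $p$ be an odd prime, $t,l\ge1$ odd integers, $0\le a\le b$ integers, $r=p^a(p-1)+l$, $s=p^b(p-1)+l$. Fix $k$ with $0\le k\le\lfloor t/2\rfloor$ and let $x=v_p\!\left(\binom t{2k}\frac{(2k)!}{k!(-24)^k}\right)$. Then for every $n\ge0$, $$(1-p^r)\binom t{2k}\frac{n!\,S_r^{(n+1)}(2k)!}{k!(-24)^k}\equiv(1-p^s)\binom t{2k}\frac{n!\,S_s^{(n+1)}(2k)!}{k!(-24)^k}\pmod{p^{a+x+1}},$$ meaning the difference of the two rational numbers has $p$-adic valuation at least $a+x+1$.
   Context: $S_r^{(n+1)}=\frac1{n!}\sum_{j=0}^{n}\binom nj(-1)^{n+j}(j+1)^{r-1}$. $v_p$ is the $p$-adic valuation on $\mathbb Q$. *)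

From mathcomp Require Import all_boot all_order all_algebra.
Set Implicit Arguments. Unset Strict Implicit. Unset Printing Implicit Defensive.
Import Order.TTheory GRing.Theory Num.Theory.
Local Open Scope ring_scope.

(* S_r^{(n+1)} = 1/n! * sum_{j=0}^n C(n,j) (-1)^(n+j) (j+1)^(r-1), as a rational.
   [S r n] denotes S_r^{(n+1)}. *)
Definition S (r n : nat) : rat :=
  (n`!%:R)^-1 * \sum_(j < n.+1)
     ('C(n, j)%:R * (-1) ^+ (n + j) * (j.+1)%:R ^+ (r.-1)).

(* p-adic valuation of a nonzero rational number (value 0 at q = 0, never used
   there: see [vp_ge]). *)
Definition vp (p : nat) (q : rat) : int :=
  (logn p `|numq q|%N)%:Z - (logn p `|denq q|%N)%:Z.

(* v_p(q) >= m, with the convention v_p(0) = +oo. *)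
Definition vp_ge (p : nat) (m : int) (q : rat) : bool :=
  (q == 0) || (m <= vp p q).

From mathcomp Require Import all_boot all_order all_algebra.
From mathcomp Require Import cyclic.
From mathcomp Require Import zify ring.
Import Order.TTheory GRing.Theory Num.Theory.
Local Open Scope ring_scope.

(* Write [nS r n = n! * S r n]; it is the integer
   sum_j C(n,j) (-1)^(n+j) (j+1)^(r-1).  For r = p^a(p-1)+l and
   s = p^b(p-1)+l with a <= b, the exponents r-1 and s-1 differ by a
   multiple of phi(p^(a+1)) = p^a(p-1) and both are at least a+1, so every
   power (j+1)^(r-1) is congruent to (j+1)^(s-1) modulo p^(a+1): by Euler's
   theorem when p does not divide j+1, and because both sides vanish
   otherwise.  Hence p^(a+1) divides nS r n - nS s n, and also p^r and p^s,
   so it divides z = (1-p^r) nS r n - (1-p^s) nS s n.  The quantity of the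
   theorem is c * z, with c the rational prefactor, and the valuation of
   c * z is v_p(c) + v_p(z) >= v_p(c) + a + 1.
   The file proves the power congruence, the divisibility of z, a valuation
   lemma for products c * z with z an integer, and then assembles them. *)

(* The exponent p^a(p-1) = phi(p^(a+1)) exceeds a; this is what makes the
   powers of a multiple of p vanish modulo p^(a+1). *)
Lemma lt_exp_totient (p a : nat) : prime p -> (a < p ^ a * (p - 1))%N.
Proof.
move=> pp; have p1 := prime_gt1 pp.
have := ltn_expl a p1.
have : (p ^ a <= p ^ a * (p - 1))%N by rewrite leq_pmulr //; lia.
lia.
Qed.

Lemma expn_totient_congr (p a b e m : nat) : prime p -> (a <= b)%N ->
  (m ^ (p ^ a * (p - 1) + e) = m ^ (p ^ b * (p - 1) + e) %[mod p ^ a.+1])%N.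
Proof.
move=> pp ab; have [cop | ncop] := boolP (coprime m p).
  have euler : (m ^ (p ^ a * (p - 1)) = 1 %[mod p ^ a.+1])%N.
    have phi : totient (p ^ a.+1) = (p ^ a * (p - 1))%N.
      by rewrite totient_pfactor // mulnC subn1.
    by rewrite -phi; apply: Euler_exp_totient; rewrite coprimeXr.
  have -> : (p ^ b * (p - 1) = p ^ a * (p - 1) * p ^ (b - a))%N.
    by rewrite mulnAC -expnD subnKC.
  rewrite !expnD [(m ^ (_ * p ^ _))%N]expnM -modnMml euler modnMml mul1n.
  have euler_pow : ((m ^ (p ^ a * (p - 1))) ^ p ^ (b - a) = 1 %[mod p ^ a.+1])%N.
    by rewrite -modnXm euler modnXm exp1n.
  by rewrite -modnMml euler_pow modnMml mul1n.
have pm : (p %| m)%N by move: ncop; rewrite coprime_sym prime_coprime // negbK.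
have vanish x : (a < x)%N -> (m ^ x = 0 %[mod p ^ a.+1])%N.
  move=> ax; apply/eqP; rewrite mod0n.
  exact: dvdn_trans (dvdn_exp2r a.+1 pm) (dvdn_exp2l m ax).
have := lt_exp_totient p a pp; have := lt_exp_totient p b pp => hb ha.
by rewrite !vanish //; lia.
Qed.

Definition nS (r n : nat) : int :=
  \sum_(j < n.+1) ('C(n, j)%:Z * (-1) ^+ (n + j) * (j.+1 ^ r.-1)%N%:Z).

Lemma fact_mul_S (r n : nat) : n`!%:R * S r n = (nS r n)%:~R :> rat.
Proof.
rewrite /S mulrA mulfV ?mul1r; last by rewrite pnatr_eq0 -lt0n fact_gt0.
rewrite /nS rmorph_sum; apply: eq_bigr => j _.
rewrite !rmorphM /= rmorphXn /= rmorphN1.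
by congr (_ * _); rewrite -!pmulrn natrX.
Qed.

Lemma nS_congr (p a b l n : nat) : prime p -> (a <= b)%N -> (0 < l)%N ->
  ((p ^ a.+1)%N%:Z %| nS (p ^ a * (p - 1) + l) n - nS (p ^ b * (p - 1) + l) n)%Z.
Proof.
move=> pp ab; case: l => // e _.
rewrite /nS -sumrB; apply: rpred_sum => j _.
rewrite -mulrBr; apply: dvdz_mull.
rewrite -eqz_mod_dvd !modz_nat !addnS /=.
by apply/eqP; congr Posz; exact: expn_totient_congr.
Qed.

Lemma Euler_factor_dvd (p a r s n : nat) : (a < r)%N -> (a < s)%N ->
  ((p ^ a.+1)%N%:Z %| nS r n - nS s n)%Z ->
  ((p ^ a.+1)%N%:Z %|
     (1 - (p ^ r)%N%:Z) * nS r n - (1 - (p ^ s)%N%:Z) * nS s n)%Z.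
Proof.
move=> a_lt_r a_lt_s dvd_diff.
have dvd_pow u : (a < u)%N -> ((p ^ a.+1)%N%:Z %| (p ^ u)%N%:Z)%Z.
  by move=> au; rewrite dvdzE; apply: dvdn_exp2l.
have -> : (1 - (p ^ r)%N%:Z) * nS r n - (1 - (p ^ s)%N%:Z) * nS s n
    = (nS r n - nS s n) - ((p ^ r)%N%:Z * nS r n - (p ^ s)%N%:Z * nS s n).
  by ring.
by apply: rpredB => //; apply: rpredB; apply: dvdz_mulr; apply: dvd_pow.
Qed.

Lemma vp_ratio (p : nat) (x y : int) : x != 0 -> y != 0 ->
  vp p (x%:~R / y%:~R) = (logn p `|x|%N)%:Z - (logn p `|y|%N)%:Z.
Proof.
move=> x0 y0; set q := x%:~R / y%:~R.
have cross : numq q * y = x * denq q.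
  apply: (@intr_inj rat); rewrite !intrM.
  have xq : q * y%:~R = x%:~R by rewrite /q divfK ?intr_eq0.
  have nq : q * (denq q)%:~R = (numq q)%:~R.
    by rewrite -{1}(divq_num_den q) divfK // intr_eq0 denq_neq0.
  by rewrite -xq -nq mulrAC.
have q0 : q != 0 by rewrite mulf_eq0 invr_eq0 !intr_eq0 negb_or x0 y0.
have := congr1 (fun z : int => logn p `|z|%N) cross; rewrite /= !abszM.
rewrite !lognM ?absz_gt0 ?numq_eq0 ?denq_neq0 // /vp; lia.
Qed.

Lemma vp_ge_mul_int (p m : nat) (c : rat) (z : int) : prime p ->
  ((p ^ m)%N%:Z %| z)%Z -> vp_ge p (m%:Z + vp p c) (c * z%:~R).
Proof.
move=> pp dz; rewrite /vp_ge.
have [->|c0] := eqVneq c 0; first by rewrite mul0r eqxx.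
have [->|z0] := eqVneq z 0; first by rewrite mulr0 eqxx.
apply/orP; right.
have -> : c * z%:~R = (numq c * z)%:~R / (denq c)%:~R.
  by rewrite intrM mulrAC -[c in LHS]divq_num_den.
rewrite vp_ratio ?mulf_neq0 ?numq_eq0 ?denq_neq0 //.
rewrite abszM lognM ?absz_gt0 ?numq_eq0 //.
have : (m <= logn p `|z|)%N.
  by rewrite -pfactor_dvdn ?absz_gt0 // -(dvdzE (p ^ m)%N%:Z).
rewrite /vp; lia.
Qed.

Theorem mainTheorem7 (p t l a b k : nat) :
  prime p -> odd p -> (0 < t)%N -> odd t -> (0 < l)%N -> odd l ->
  (a <= b)%N -> (k <= t./2)%N ->
  let r := (p ^ a * (p - 1) + l)%N in
  let s := (p ^ b * (p - 1) + l)%N in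
  let c : rat := 'C(t, 2 * k)%:R * (2 * k)`!%:R / (k`!%:R * (-24) ^+ k) in
  let x := vp p c in
  forall n : nat,
    vp_ge p (a%:Z + x + 1)
      ((1 - p%:R ^+ r) * ('C(t, 2 * k)%:R * (n`!%:R * S r n * (2 * k)`!%:R)
                           / (k`!%:R * (-24) ^+ k))
       - (1 - p%:R ^+ s) * ('C(t, 2 * k)%:R * (n`!%:R * S s n * (2 * k)`!%:R)
                           / (k`!%:R * (-24) ^+ k))).
Proof.
move=> pp _ _ _ l0 _ ab _ r s c x n.
set z : int := (1 - (p ^ r)%N%:Z) * nS r n - (1 - (p ^ s)%N%:Z) * nS s n.
have -> : (1 - p%:R ^+ r) * ('C(t, 2 * k)%:R * (n`!%:R * S r n * (2 * k)`!%:R)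
                           / (k`!%:R * (-24) ^+ k))
       - (1 - p%:R ^+ s) * ('C(t, 2 * k)%:R * (n`!%:R * S s n * (2 * k)`!%:R)
                           / (k`!%:R * (-24) ^+ k)) = c * z%:~R.
  rewrite !fact_mul_S /z /c rmorphB !rmorphM /= !rmorphB /= rmorph1.
  by rewrite -!pmulrn !natrX; ring.
have -> : a%:Z + x + 1 = a.+1%:Z + x by lia.
apply/vp_ge_mul_int/Euler_factor_dvd; first exact: pp.
- by have := lt_exp_totient p a pp; rewrite /r; lia.
- by have := lt_exp_totient p b pp; rewrite /s; lia.
- exact: nS_congr.
Qed.
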